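(* Let $\mathcal U=(V,\tilde V,W,\tilde W,R)$ be a gradient space and let $\mathcal K\subseteq\mathrm{Sob}(\mathcal U)$ be a regular Rellich–Kondrachov cone containing a nonzero element. Then there exists $u\in\mathcal K$, $u\neq0$, such that $$\frac{\|g_u\|_W}{\|u\|_V}=\inf_{v\in\mathcal K,\ v\neq0}\frac{\|g_v\|_W}{\|v\|_V}>0.$$
   Context: Let $\tilde V,\tilde W$ be vector spaces over $\mathbf R$ or $\mathbf C$. A gradient relation is a set $R\subseteq\tilde V\times\tilde W$ such that (G1) if $(u,g)\in R$ and $(u',g')\in R$ then $(u+u',g+g')\in R$; (G2) if $(u,g)\in R$ and $\alpha>0$ then $(\alpha u,\alpha g)\in R$. A gradient space $\mathcal U=(V,\tilde V,W,\tilde W,R)$ consists of vector spaces $\tilde V,\tilde W$, a gradient relation $R\subseteq\tilde V\times\tilde W$, and linear subspaces $V\subseteq\tilde V$, $W\subseteq\tilde W$ such that: (GS1) $V$ is a reflexive Banach space with norm $\|\cdot\|_V$; (GS2) $W$ is a reflexive and strictly convex Banach space with norm $\|\cdot\|_W$; (GS3) if $(u,g)\in R$ with $u\in V$, $g\in W$, then there exists $g'\in W$ with $(-u,g')\in R$; (GS4) if $u,u_i\in V$ and $g,g_i\in W$ with $(u_i,g_i)\in R$ for $i=1,2,\dots$, $\|u-u_i\|_V\to0$ and $\|g-g_i\|_W\to0$, then $(u,g)\in R$. The Sobolev space of $\mathcal U$ is $\mathrm{Sob}(\mathcal U)=\{u\in V:(u,g)\in R\text{ for some }g\in W\}$. Each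 $u\in\mathrm{Sob}(\mathcal U)$ has a unique minimal gradient $g_u\in W$: $(u,g_u)\in R$ and $\|g_u\|_W\le\|g\|_W$ for all $g\in W$ with $(u,g)\in R$. A cone $\mathcal K\subseteq\mathrm{Sob}(\mathcal U)$ (i.e. $u\in\mathcal K,\alpha>0\Rightarrow\alpha u\in\mathcal K$) is a Rellich–Kondrachov cone if for every sequence $\{u_i\}\subseteq\mathcal K$ such that $\{u_i\}$ is bounded in $V$ and $\{g_{u_i}\}$ is bounded in $W$, there is a subsequence converging in $V$ to an element of $\mathcal K$. It is regular if, for $u\in\mathcal K$, $g_u=0$ implies $u=0$. *)

From Stdlib Require Import Reals Lra ClassicalEpsilon.
Open Scope R_scope.

Record VS := {
  car :> Type;
  vzero : car;
  vadd : car -> car -> car;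
  vopp : car -> car;
  vscal : R -> car -> car;
  vadd_assoc : forall x y z, vadd x (vadd y z) = vadd (vadd x y) z;
  vadd_comm : forall x y, vadd x y = vadd y x;
  vadd_0 : forall x, vadd x vzero = x;
  vadd_opp : forall x, vadd x (vopp x) = vzero;
  vscal_1 : forall x, vscal 1 x = x;
  vscal_assoc : forall a b x, vscal a (vscal b x) = vscal (a * b) x;
  vscal_distr_v : forall a x y, vscal a (vadd x y) = vadd (vscal a x) (vscal a y);
  vscal_distr_s : forall a b x, vscal (a + b) x = vadd (vscal a x) (vscal b x)
}.

Arguments vzero {v}.
Arguments vadd {v}.
Arguments vopp {v}.
Arguments vscal {v}.

Definition vsub {X : VS} (x y : X) : X := vadd x (vopp y).

(** A linear subspace [mem] of [X] carrying a norm [nrm] (only its values on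
    [mem] are meaningful). *)
Record NormedSub (X : VS) := {
  mem : X -> Prop;
  nrm : X -> R;
  mem_0 : mem vzero;
  mem_add : forall x y, mem x -> mem y -> mem (vadd x y);
  mem_scal : forall a x, mem x -> mem (vscal a x);
  nrm_nonneg : forall x, mem x -> 0 <= nrm x;
  nrm_eq0 : forall x, mem x -> nrm x = 0 -> x = vzero;
  nrm_scal : forall a x, mem x -> nrm (vscal a x) = Rabs a * nrm x;
  nrm_triangle : forall x y, mem x -> mem y -> nrm (vadd x y) <= nrm x + nrm y
}.

Arguments mem {X}.
Arguments nrm {X}.

Definition complete {X : VS} (V : NormedSub X) : Prop :=
  forall x : nat -> X, (forall n, mem V (x n)) ->
    (forall eps, eps > 0 -> exists N, forall m n, (m >= N)%nat -> (n >= N)%nat ->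
        nrm V (vsub (x m) (x n)) < eps) ->
    exists l, mem V l /\ Un_cv (fun n => nrm V (vsub (x n) l)) 0.

(** Continuous linear functionals on V (functions X -> R, only their values on V matter). *)
Definition is_dual_elt {X : VS} (V : NormedSub X) (f : X -> R) : Prop :=
  (forall x y, mem V x -> mem V y -> f (vadd x y) = f x + f y) /\
  (forall a x, mem V x -> f (vscal a x) = a * f x) /\
  (exists C, forall x, mem V x -> Rabs (f x) <= C * nrm V x).

Definition dual_bound {X : VS} (V : NormedSub X) (f : X -> R) (M : R) : Prop :=
  0 <= M /\ forall x, mem V x -> Rabs (f x) <= M * nrm V x.

Definition is_bidual_elt {X : VS} (V : NormedSub X) (Phi : (X -> R) -> R) : Prop :=
  (forall f g, is_dual_elt V f -> is_dual_elt V g ->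
     (forall x, mem V x -> f x = g x) -> Phi f = Phi g) /\
  (forall f g, is_dual_elt V f -> is_dual_elt V g ->
     Phi (fun x => f x + g x) = Phi f + Phi g) /\
  (forall a f, is_dual_elt V f -> Phi (fun x => a * f x) = a * Phi f) /\
  (exists C, forall f M, is_dual_elt V f -> dual_bound V f M -> Rabs (Phi f) <= C * M).

Definition reflexive {X : VS} (V : NormedSub X) : Prop :=
  forall Phi, is_bidual_elt V Phi ->
    exists x, mem V x /\ forall f, is_dual_elt V f -> Phi f = f x.

Definition reflexive_Banach {X : VS} (V : NormedSub X) : Prop :=
  complete V /\ reflexive V.

Definition strictly_convex {X : VS} (W : NormedSub X) : Prop :=
  forall x y, mem W x -> mem W y -> nrm W x = 1 -> nrm W y = 1 -> x <> y ->
    nrm W (vscal (1/2) (vadd x y)) < 1.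

Definition gradient_relation {X Y : VS} (Rel : X -> Y -> Prop) : Prop :=
  (forall u g u' g', Rel u g -> Rel u' g' -> Rel (vadd u u') (vadd g g')) /\
  (forall u g a, Rel u g -> a > 0 -> Rel (vscal a u) (vscal a g)).

(** Gradient space (V, X, W, Y, Rel), X = tilde V, Y = tilde W. *)
Definition gradient_space {X Y : VS} (V : NormedSub X) (W : NormedSub Y)
  (Rel : X -> Y -> Prop) : Prop :=
  gradient_relation Rel /\
  reflexive_Banach V /\
  (reflexive_Banach W /\ strictly_convex W) /\
  (forall u g, Rel u g -> mem V u -> mem W g ->
      exists g', mem W g' /\ Rel (vopp u) g') /\
  (forall u g (us : nat -> X) (gs : nat -> Y),
      mem V u -> mem W g -> (forall i, mem V (us i)) -> (forall i, mem W (gs i)) ->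
      (forall i, Rel (us i) (gs i)) ->
      Un_cv (fun i => nrm V (vsub u (us i))) 0 ->
      Un_cv (fun i => nrm W (vsub g (gs i))) 0 ->
      Rel u g).

Definition Sob {X Y : VS} (V : NormedSub X) (W : NormedSub Y)
  (Rel : X -> Y -> Prop) (u : X) : Prop :=
  mem V u /\ exists g, mem W g /\ Rel u g.

Definition is_min_grad {X Y : VS} (W : NormedSub Y) (Rel : X -> Y -> Prop)
  (u : X) (g : Y) : Prop :=
  mem W g /\ Rel u g /\ forall g', mem W g' -> Rel u g' -> nrm W g <= nrm W g'.

(** The minimal gradient g_u (chosen by Hilbert's epsilon; it exists and is
    unique for u in Sob in a gradient space). *)
Definition mingrad {X Y : VS} (W : NormedSub Y) (Rel : X -> Y -> Prop) (u : X) : Y :=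
  epsilon (inhabits (@vzero Y)) (fun g => is_min_grad W Rel u g).

Definition is_cone {X Y : VS} (V : NormedSub X) (W : NormedSub Y)
  (Rel : X -> Y -> Prop) (K : X -> Prop) : Prop :=
  (forall u, K u -> Sob V W Rel u) /\
  (forall u a, K u -> a > 0 -> K (vscal a u)).

Definition RK_cone {X Y : VS} (V : NormedSub X) (W : NormedSub Y)
  (Rel : X -> Y -> Prop) (K : X -> Prop) : Prop :=
  is_cone V W Rel K /\
  forall us : nat -> X, (forall i, K (us i)) ->
    (exists M, forall i, nrm V (us i) <= M) ->
    (exists M, forall i, nrm W (mingrad W Rel (us i)) <= M) ->
    exists (phi : nat -> nat) (u : X),
      (forall i, (phi i < phi (S i))%nat) /\ K u /\
      Un_cv (fun i => nrm V (vsub (us (phi i)) u)) 0.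

Definition regular_cone {X Y : VS} (W : NormedSub Y)
  (Rel : X -> Y -> Prop) (K : X -> Prop) : Prop :=
  forall u, K u -> mingrad W Rel u = vzero -> u = vzero.

Definition is_inf (E : R -> Prop) (m : R) : Prop :=
  (forall x, E x -> m <= x) /\ (forall b, (forall x, E x -> b <= x) -> b <= m).

(* The infimum m of the Rayleigh quotients is approached by a sequence w_k of
   K with |w_k|_V = 1.  By the Rellich-Kondrachov property a subsequence
   converges in V to some u in K, and |u|_V = 1.  The minimal gradients of the
   w_k are bounded, so reflexivity of W (applied to a Banach limit) yields a
   weak cluster point g of them; by Mazur's lemma g is a norm limit of
   gradients of points converging to u, hence (u, g) is in R by (GS4) and
   |g_u|_W <= |g|_W <= m.  So u attains m, and m > 0 by regularity. *)

From Stdlib Require Import Reals Lra Lia List ClassicalEpsilon Classical FunctionalExtensionality.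
From mathcomp Require classical_sets boolp ssrbool.
Open Scope R_scope.

Lemma zorn_preorder (T : Type) (t0 : T) (le : T -> T -> Prop) :
  (forall t, le t t) -> (forall r s t, le r s -> le s t -> le r t) ->
  (forall A : T -> Prop, (forall s t, A s -> A t -> le s t \/ le t s) ->
      exists t, forall s, A s -> le s t) ->
  exists t, forall s, le t s -> le s t.
Proof.
  intros Hrefl Htrans Hchain.
  assert (E : forall a b, le a b <-> is_true (boolp.asbool (le a b))).
  { intros a b; split; intro H.
    - exact (ssrbool.introT (boolp.asboolP _) H).
    - exact (ssrbool.elimT (boolp.asboolP _) H). }
  destruct (@classical_sets.ZL_preorder T t0 (fun a b => boolp.asbool (le a b))) as [t Hmax].
  - intro t; apply E, Hrefl.
  - intros r s t H1 H2; apply E; apply E in H1; apply E in H2; eauto.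
  - intros A HA. destruct (Hchain A) as [t Ht].
    + intros s t Hs Ht; destruct (HA s t Hs Ht) as [H|H]; [left|right]; apply E; exact H.
    + exists t; intros s Hs; apply E; auto.
  - exists t; intros s Hs. apply E, Hmax, E, Hs.
Qed.

Section VectorSpaceAlgebra.
Context {X : VS}.
Implicit Types x y z : X.

Lemma vadd_0_l x : vadd vzero x = x.
Proof. rewrite vadd_comm; apply vadd_0. Qed.

Lemma vadd_opp_l x : vadd (vopp x) x = vzero.
Proof. rewrite vadd_comm; apply vadd_opp. Qed.

Lemma vadd_cancel_l x y z : vadd x y = vadd x z -> y = z.
Proof.
  intro H. rewrite <- (vadd_0_l y), <- (vadd_0_l z), <- (vadd_opp_l x), <- !vadd_assoc, H.
  reflexivity.
Qed.

Lemma vscal_0_l x : vscal 0 x = vzero.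
Proof.
  apply (vadd_cancel_l (vscal 0 x)). rewrite vadd_0, <- vscal_distr_s. f_equal; ring.
Qed.

Lemma vscal_0_r a : vscal a (@vzero X) = vzero.
Proof.
  apply (vadd_cancel_l (vscal a vzero)). rewrite vadd_0, <- vscal_distr_v, vadd_0.
  reflexivity.
Qed.

Lemma vopp_vscal x : vopp x = vscal (-1) x.
Proof.
  apply (vadd_cancel_l x). rewrite vadd_opp. rewrite <- (vscal_1 _ x) at 1.
  rewrite <- vscal_distr_s. replace (1 + -1) with 0 by ring. symmetry; apply vscal_0_l.
Qed.

Lemma vsubE x y : vsub x y = vadd x (vscal (-1) y).
Proof. unfold vsub; rewrite vopp_vscal; reflexivity. Qed.

Lemma vadd_addACA x y z w : vadd (vadd x y) (vadd z w) = vadd (vadd x z) (vadd y w).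
Proof.
  rewrite <- !vadd_assoc. f_equal. rewrite !vadd_assoc. f_equal. apply vadd_comm.
Qed.

End VectorSpaceAlgebra.

Inductive vexpr :=
  | VAtom (n : nat) | VZero | VAdd (a b : vexpr) | VScal (r : R) (a : vexpr)
  | VOpp (a : vexpr) | VSub (a b : vexpr).

Fixpoint veval {X : VS} (env : list X) (e : vexpr) : X :=
  match e with
  | VAtom n => nth n env vzero
  | VZero => vzero
  | VAdd a b => vadd (veval env a) (veval env b)
  | VScal r a => vscal r (veval env a)
  | VOpp a => vopp (veval env a)
  | VSub a b => vsub (veval env a) (veval env b)
  end.

Fixpoint lincomb {X : VS} (env : list X) (cs : list R) : X :=
  match env, cs with
  | x :: e, c :: cs' => vadd (vscal c x) (lincomb e cs')
  | _, _ => vzero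
  end.

Fixpoint coef_add (cs ds : list R) : list R :=
  match cs, ds with
  | nil, _ => ds
  | _, nil => cs
  | c :: cs', d :: ds' => (c + d) :: coef_add cs' ds'
  end.

Fixpoint coef_unit (m : nat) : list R :=
  match m with O => 1 :: nil | S m' => 0 :: coef_unit m' end.

Definition coef_scal (r : R) (cs : list R) : list R := map (fun c => r * c) cs.

Fixpoint vexpr_coef (e : vexpr) : list R :=
  match e with
  | VAtom n => coef_unit n
  | VZero => nil
  | VAdd a b => coef_add (vexpr_coef a) (vexpr_coef b)
  | VScal r a => coef_scal r (vexpr_coef a)
  | VOpp a => coef_scal (-1) (vexpr_coef a)
  | VSub a b => coef_add (vexpr_coef a) (coef_scal (-1) (vexpr_coef b))
  end.

Lemma lincomb_nil {X : VS} (env : list X) : lincomb env nil = vzero.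
Proof. destruct env; reflexivity. Qed.

Lemma lincomb_add {X : VS} (env : list X) cs ds :
  lincomb env (coef_add cs ds) = vadd (lincomb env cs) (lincomb env ds).
Proof.
  revert cs ds; induction env as [|x e IH]; intros cs ds; simpl.
  - rewrite vadd_0; reflexivity.
  - destruct cs as [|c cs]; destruct ds as [|d ds]; simpl.
    + rewrite vadd_0; reflexivity.
    + rewrite vadd_0_l; reflexivity.
    + rewrite vadd_0; reflexivity.
    + rewrite IH, vscal_distr_s. apply vadd_addACA.
Qed.

Lemma lincomb_scal {X : VS} (env : list X) r cs :
  lincomb env (coef_scal r cs) = vscal r (lincomb env cs).
Proof.
  revert cs; induction env as [|x e IH]; intros cs; simpl.
  - rewrite vscal_0_r; reflexivity.
  - destruct cs as [|c cs]; simpl.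
    + rewrite vscal_0_r; reflexivity.
    + rewrite IH, vscal_distr_v, vscal_assoc. reflexivity.
Qed.

Lemma lincomb_unit {X : VS} (env : list X) m : lincomb env (coef_unit m) = nth m env vzero.
Proof.
  revert m; induction env as [|x e IH]; intros m; simpl.
  - destruct m; reflexivity.
  - destruct m; simpl.
    + rewrite vscal_1, lincomb_nil, vadd_0. reflexivity.
    + rewrite IH, vscal_0_l, vadd_0_l. reflexivity.
Qed.

Lemma veval_coef {X : VS} (env : list X) e : veval env e = lincomb env (vexpr_coef e).
Proof.
  induction e; simpl.
  - rewrite lincomb_unit; reflexivity.
  - rewrite lincomb_nil; reflexivity.
  - rewrite lincomb_add, IHe1, IHe2; reflexivity.
  - rewrite lincomb_scal, IHe; reflexivity.
  - rewrite lincomb_scal, IHe, vopp_vscal; reflexivity.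
  - rewrite lincomb_add, lincomb_scal, IHe1, IHe2, vsubE; reflexivity.
Qed.

Fixpoint coef_null (l : list R) : Prop :=
  match l with nil => True | c :: l' => c = 0 /\ coef_null l' end.

(* Coefficient lists are compared up to trailing zeros. *)
Fixpoint coef_eq (cs ds : list R) : Prop :=
  match cs with
  | nil => coef_null ds
  | c :: cs' => match ds with nil => coef_null cs | d :: ds' => c = d /\ coef_eq cs' ds' end
  end.

Lemma lincomb_null {X : VS} (env : list X) cs : coef_null cs -> lincomb env cs = vzero.
Proof.
  revert cs; induction env as [|x e IH]; intros cs H; simpl; auto.
  destruct cs as [|c cs]; auto. destruct H as [-> H]. rewrite vscal_0_l, vadd_0_l. auto.
Qed.

Lemma lincomb_coef_eq {X : VS} (env : list X) cs ds :
  coef_eq cs ds -> lincomb env cs = lincomb env ds.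
Proof.
  revert cs ds; induction env as [|x e IH]; intros cs ds H.
  - destruct cs, ds; reflexivity.
  - destruct cs as [|c cs].
    + simpl in H. rewrite lincomb_nil. symmetry. apply lincomb_null; auto.
    + destruct ds as [|d ds].
      * rewrite lincomb_nil. apply lincomb_null; auto.
      * destruct H as [-> H]. simpl. rewrite (IH cs ds H). reflexivity.
Qed.

Ltac find_index x l :=
  match l with
  | x :: _ => constr:(O)
  | _ :: ?l' => let n := find_index x l' in constr:(S n)
  end.

Ltac reify_vexpr env t :=
  match t with
  | @vadd _ ?a ?b =>
      let ra := reify_vexpr env a in let rb := reify_vexpr env b in constr:(VAdd ra rb)
  | @vsub _ ?a ?b =>
      let ra := reify_vexpr env a in let rb := reify_vexpr env b in constr:(VSub ra rb)
  | @vscal _ ?r ?a => let ra := reify_vexpr env a in constr:(VScal r ra)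
  | @vopp _ ?a => let ra := reify_vexpr env a in constr:(VOpp ra)
  | @vzero _ => constr:(VZero)
  | _ => let n := find_index t env in constr:(VAtom n)
  end.

(* [vring atoms] proves a linear identity between vector expressions built on
   [atoms] by reifying both sides to coefficient lists; the remaining scalar
   goals are closed by [ring] or [field]. *)
Ltac vring env :=
  match goal with
  | |- ?l = ?r =>
    let rl := reify_vexpr env l in let rr := reify_vexpr env r in
    change (veval env rl = veval env rr);
    rewrite !veval_coef; apply lincomb_coef_eq; simpl; repeat split;
    try ring; try (field; lra)
  end.
Section NormFacts.
Context {X : VS} (V : NormedSub X).

Lemma mem_sub x y : mem V x -> mem V y -> mem V (vsub x y).
Proof. intros; rewrite vsubE; apply mem_add; auto; apply mem_scal; auto. Qed.

Lemma nrm_scal_nonneg a x : 0 <= a -> mem V x -> nrm V (vscal a x) = a * nrm V x.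
Proof. intros; rewrite nrm_scal, Rabs_right; auto; lra. Qed.

Lemma nrm_opp_scal x : mem V x -> nrm V (vscal (-1) x) = nrm V x.
Proof.
  intros. rewrite nrm_scal by auto.
  replace (Rabs (-1)) with 1 by (rewrite Rabs_left; lra). ring.
Qed.

Lemma nrm_sub_sym x y : mem V x -> mem V y -> nrm V (vsub x y) = nrm V (vsub y x).
Proof.
  intros. replace (vsub y x) with (vscal (-1) (vsub x y)) by vring (x :: y :: nil).
  rewrite nrm_opp_scal; auto using mem_sub.
Qed.

Lemma nrm_vzero : nrm V vzero = 0.
Proof. rewrite <- (vscal_0_l vzero), nrm_scal by apply mem_0. rewrite Rabs_R0; ring. Qed.

Lemma nrm_reverse_triangle x y : mem V x -> mem V y -> nrm V x - nrm V y <= nrm V (vsub x y).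
Proof.
  intros. pose proof (nrm_triangle _ V (vsub x y) y (mem_sub x y H H0) H0).
  replace (vadd (vsub x y) y) with x in H1 by vring (x :: y :: nil). lra.
Qed.

End NormFacts.

Lemma is_inf_exists (E : R -> Prop) :
  (exists x, E x) -> (exists m, forall x, E x -> m <= x) -> exists m, is_inf E m.
Proof.
  intros [x Ex] [m Hm].
  assert (Hb : bound (fun y => E (- y))).
  { exists (- m). intros y Hy. apply Hm in Hy. lra. }
  assert (Hn : exists y, E (- y)) by (exists (- x); rewrite Ropp_involutive; auto).
  destruct (completeness _ Hb Hn) as [l [Hu Hl]].
  exists (- l). split.
  - intros z Ez. assert (- z <= l) by (apply Hu; rewrite Ropp_involutive; auto). lra.
  - intros b Hb'. assert (l <= - b).
    { apply Hl. intros y Hy. apply Hb' in Hy. lra. }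
    lra.
Qed.

Lemma is_inf_approx (E : R -> Prop) m : is_inf E m ->
  forall eps, eps > 0 -> exists x, E x /\ x < m + eps.
Proof.
  intros [H1 H2] eps He. apply NNPP. intro N.
  assert (m + eps <= m).
  { apply H2. intros x Ex. apply Rnot_lt_le. intro. apply N. exists x; auto. }
  lra.
Qed.

(* [Rinf E] is meaningful only when [E] is nonempty and bounded below. *)
Definition Rinf (E : R -> Prop) : R := epsilon (inhabits 0) (is_inf E).

Lemma Rinf_spec E :
  (exists x, E x) -> (exists m, forall x, E x -> m <= x) -> is_inf E (Rinf E).
Proof. intros. unfold Rinf. apply epsilon_spec. apply is_inf_exists; auto. Qed.

Definition inv_succ (k : nat) : R := / (INR k + 1).

Lemma inv_succ_pos k : 0 < inv_succ k.
Proof. apply Rinv_0_lt_compat. pose proof (pos_INR k). lra. Qed.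

Lemma inv_succ_le_1 k : inv_succ k <= 1.
Proof.
  unfold inv_succ. rewrite <- Rinv_1. apply Rinv_le_contravar; [lra|].
  pose proof (pos_INR k); lra.
Qed.

Lemma inv_succ_le n k : (n <= k)%nat -> inv_succ k <= inv_succ n.
Proof.
  intro H. apply Rinv_le_contravar. { pose proof (pos_INR n); lra. }
  apply le_INR in H. lra.
Qed.

Lemma inv_succ_lt eps : eps > 0 -> exists N, inv_succ N < eps.
Proof.
  intro He. destruct (INR_unbounded (/ eps)) as [N HN]. exists N.
  rewrite <- (Rinv_inv eps). apply Rinv_lt_contravar.
  - apply Rmult_lt_0_compat. { apply Rinv_0_lt_compat; lra. } pose proof (pos_INR N); lra.
  - lra.
Qed.

Lemma le_of_le_plus_inv_succ a b : (forall n, a <= b + inv_succ n) -> a <= b.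
Proof.
  intro H. apply Rle_plus_epsilon. intros eps He. destruct (inv_succ_lt eps He) as [N HN].
  specialize (H N). lra.
Qed.

Lemma Un_cv_inv_succ_bound (a : nat -> R) : (forall k, 0 <= a k <= inv_succ k) -> Un_cv a 0.
Proof.
  intros H eps He. destruct (inv_succ_lt eps He) as [N HN]. exists N. intros n Hn.
  unfold R_dist. rewrite Rminus_0_r. destruct (H n) as [H1 H2].
  pose proof (inv_succ_le N n Hn). rewrite Rabs_right by lra. lra.
Qed.

Section HahnBanach.
Context {Z : VS} (M : Z -> Prop) (p : Z -> R).
Hypothesis M_vzero : M vzero.
Hypothesis M_add : forall x y, M x -> M y -> M (vadd x y).
Hypothesis M_scal : forall a x, M x -> M (vscal a x).
Hypothesis p_add : forall x y, M x -> M y -> p (vadd x y) <= p x + p y.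
Hypothesis p_scal : forall a x, 0 <= a -> M x -> p (vscal a x) = a * p x.

Definition linear_on (D : Z -> Prop) (g : Z -> R) :=
  (forall x y, D x -> D y -> g (vadd x y) = g x + g y) /\
  (forall a x, D x -> g (vscal a x) = a * g x).

Definition subspace (D : Z -> Prop) :=
  D vzero /\ (forall x y, D x -> D y -> D (vadd x y)) /\ (forall a x, D x -> D (vscal a x)).

Definition dominated_on (D : Z -> Prop) (g : Z -> R) :=
  subspace D /\ (forall x, D x -> M x) /\ linear_on D g /\ (forall x, D x -> g x <= p x).

Definition extends (D : Z -> Prop) (g : Z -> R) (D' : Z -> Prop) (g' : Z -> R) :=
  forall x, D x -> D' x /\ g' x = g x.

Lemma p_vzero : p vzero = 0.
Proof. rewrite <- (vscal_0_l (@vzero Z)), p_scal by (auto; lra). ring. Qed.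

Lemma decomposition_unique (D : Z -> Prop) (y d1 d2 : Z) t1 t2 :
  subspace D -> ~ D y -> D d1 -> D d2 ->
  vadd d1 (vscal t1 y) = vadd d2 (vscal t2 y) -> t1 = t2 /\ d1 = d2.
Proof.
  intros [HD0 [HDa HDs]] Hy H1 H2 E.
  assert (Ht : t1 = t2).
  { destruct (Req_dec t1 t2) as [|Hne]; auto. exfalso. apply Hy.
    assert (Ey : vscal (t1 - t2) y = vadd d2 (vscal (-1) d1)).
    { transitivity (vadd (vadd d1 (vscal t1 y)) (vadd (vscal (-1) d1) (vscal (- t2) y))).
      - vring (d1 :: y :: nil).
      - rewrite E. vring (d1 :: d2 :: y :: nil). }
    replace y with (vscal (/ (t1 - t2)) (vscal (t1 - t2) y)) by vring (y :: nil).
    rewrite Ey. apply HDs, HDa, HDs; auto. }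
  split; auto. subst t2. rewrite (vadd_comm _ d1), (vadd_comm _ d2) in E.
  exact (vadd_cancel_l _ _ _ E).
Qed.

(* Meaningful only on D + R y, where the decomposition is unique. *)
Definition line_extension (D : Z -> Prop) (g : Z -> R) (y : Z) (c : R) (z : Z) : R :=
  let dt := epsilon (inhabits (@vzero Z, 0))
              (fun dt => D (fst dt) /\ z = vadd (fst dt) (vscal (snd dt) y)) in
  g (fst dt) + snd dt * c.

Lemma line_extension_eq (D : Z -> Prop) (g : Z -> R) (y d : Z) (c t : R) :
  subspace D -> ~ D y -> D d -> line_extension D g y c (vadd d (vscal t y)) = g d + t * c.
Proof.
  intros HS Hy Hd. unfold line_extension.
  match goal with |- context [epsilon ?i ?P] =>
    assert (Hs : P (epsilon i P)) by (apply epsilon_spec; exists (d, t); simpl; auto);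
    revert Hs; generalize (epsilon i P) end.
  intros [d' t'] [Hd' E]. simpl in *.
  destruct (decomposition_unique D y d d' t t' HS Hy Hd Hd' E). subst. reflexivity.
Qed.

Lemma extend_by_vector (D : Z -> Prop) (g : Z -> R) (y : Z) (c : R) :
  dominated_on D g -> M y -> ~ D y ->
  (forall d t, D d -> g d + t * c <= p (vadd d (vscal t y))) ->
  exists D' g', dominated_on D' g' /\ extends D g D' g' /\ D' y /\ g' y = c.
Proof.
  intros [HS [HM [[Ga Gs] Gp]]] My Hy Hc.
  pose proof (line_extension_eq D g y) as Hg'.
  pose proof HS as [HD0 [HDa HDs]].
  exists (fun z => exists d t, D d /\ z = vadd d (vscal t y)), (line_extension D g y c).
  split; [|split; [|split]].
  - split; [split; [|split] | split; [|split]].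
    + exists vzero, 0. split; auto. vring (y :: nil).
    + intros x z [d1 [t1 [H1 ->]]] [d2 [t2 [H2 ->]]]. exists (vadd d1 d2), (t1 + t2).
      split; auto. vring (d1 :: d2 :: y :: nil).
    + intros a x [d [t [H ->]]]. exists (vscal a d), (a * t). split; auto. vring (d :: y :: nil).
    + intros x [d [t [H ->]]]. apply M_add; auto.
    + split.
      * intros x z [d1 [t1 [H1 ->]]] [d2 [t2 [H2 ->]]].
        replace (vadd (vadd d1 (vscal t1 y)) (vadd d2 (vscal t2 y)))
          with (vadd (vadd d1 d2) (vscal (t1 + t2) y)) by vring (d1 :: d2 :: y :: nil).
        rewrite !Hg', Ga by auto. ring.
      * intros a x [d [t [H ->]]].
        replace (vscal a (vadd d (vscal t y))) with (vadd (vscal a d) (vscal (a * t) y))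
          by vring (d :: y :: nil).
        rewrite !Hg', Gs by auto. ring.
    + intros x [d [t [H ->]]]. rewrite Hg' by auto. apply Hc; auto.
  - intros x Hx. split.
    + exists x, 0. split; auto. vring (x :: y :: nil).
    + replace x with (vadd x (vscal 0 y)) at 1 by vring (x :: y :: nil).
      rewrite Hg' by auto. ring.
  - exists vzero, 1. split; auto. vring (y :: nil).
  - replace y with (vadd vzero (vscal 1 y)) at 2 by vring (y :: nil).
    rewrite Hg' by auto. replace (g vzero) with (g (vscal 0 vzero)) by (rewrite vscal_0_l; auto).
    rewrite Gs by auto. ring.
Qed.

Lemma extension_gap (D : Z -> Prop) (g : Z -> R) (y d1 d2 : Z) :
  dominated_on D g -> M y -> D d1 -> D d2 ->
  g d1 - p (vadd d1 (vscal (-1) y)) <= p (vadd d2 (vscal 1 y)) - g d2.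
Proof.
  intros [[HD0 [HDa HDs]] [HM [[Ga Gs] Gp]]] My H1 H2.
  pose proof (Gp _ (HDa _ _ H1 H2)) as Hp. rewrite Ga in Hp by auto.
  replace (vadd d1 d2) with (vadd (vadd d1 (vscal (-1) y)) (vadd d2 (vscal 1 y))) in Hp
    by vring (d1 :: d2 :: y :: nil).
  pose proof (p_add (vadd d1 (vscal (-1) y)) (vadd d2 (vscal 1 y))
                (M_add _ _ (HM _ H1) (M_scal _ _ My)) (M_add _ _ (HM _ H2) (M_scal _ _ My))).
  lra.
Qed.

(* By [extension_gap], any c between sup_d (g d - p (d - y)) and
   inf_d (p (d + y) - g d) is admissible. *)
Lemma extension_value_exists (D : Z -> Prop) (g : Z -> R) (y : Z) :
  dominated_on D g -> M y ->
  exists c, forall d t, D d -> g d + t * c <= p (vadd d (vscal t y)).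
Proof.
  intros Hdom My. pose proof Hdom as [[HD0 [HDa HDs]] [HM [[Ga Gs] Gp]]].
  pose (A := fun r => exists d, D d /\ r = g d - p (vadd d (vscal (-1) y))).
  assert (Hb : bound A).
  { exists (p (vadd vzero (vscal 1 y)) - g vzero). intros r [d [Hd ->]].
    apply (extension_gap D); auto. }
  assert (Hne : exists r, A r) by (exists (g vzero - p (vadd vzero (vscal (-1) y))), vzero; auto).
  destruct (completeness A Hb Hne) as [c [Hub Hlub]].
  exists c. intros d t Hd.
  destruct (Rtotal_order t 0) as [Ht | [Ht | Ht]].
  - assert (A (g (vscal (/ - t) d) - p (vadd (vscal (/ - t) d) (vscal (-1) y)))) as HA
      by (exists (vscal (/ - t) d); auto).
    apply Hub in HA. rewrite Gs in HA by auto.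
    replace (vadd d (vscal t y)) with (vscal (- t) (vadd (vscal (/ - t) d) (vscal (-1) y)))
      by vring (d :: y :: nil).
    rewrite p_scal by (try lra; apply M_add; auto).
    apply (Rmult_le_compat_l (- t)) in HA; [|lra].
    replace (- t * (/ - t * g d - p (vadd (vscal (/ - t) d) (vscal (-1) y))))
      with (g d - - t * p (vadd (vscal (/ - t) d) (vscal (-1) y))) in HA by (field; lra).
    lra.
  - subst t. replace (vadd d (vscal 0 y)) with d by vring (d :: y :: nil).
    rewrite Rmult_0_l, Rplus_0_r. apply Gp; auto.
  - assert (c <= p (vadd (vscal (/ t) d) (vscal 1 y)) - g (vscal (/ t) d)) as HA.
    { apply Hlub. intros r [d1 [Hd1 ->]]. apply (extension_gap D); auto. }
    rewrite Gs in HA by auto.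
    replace (vadd d (vscal t y)) with (vscal t (vadd (vscal (/ t) d) (vscal 1 y)))
      by vring (d :: y :: nil).
    rewrite p_scal by (try lra; apply M_add; auto).
    apply (Rmult_le_compat_l t) in HA; [|lra].
    replace (t * (p (vadd (vscal (/ t) d) (vscal 1 y)) - / t * g d))
      with (t * p (vadd (vscal (/ t) d) (vscal 1 y)) - g d) in HA by (field; lra).
    lra.
Qed.

Lemma extend_dominated (D : Z -> Prop) (g : Z -> R) (y : Z) :
  dominated_on D g -> M y -> ~ D y ->
  exists D' g', dominated_on D' g' /\ extends D g D' g' /\ D' y.
Proof.
  intros Hd My Hy. destruct (extension_value_exists D g y Hd My) as [c Hc].
  destruct (extend_by_vector D g y c Hd My Hy Hc) as [D' [g' [? [? [? _]]]]].
  exists D', g'; auto.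
Qed.

Lemma chain_union_dominated (I : Type) (i0 : I) (D : I -> Z -> Prop) (g : I -> Z -> R) :
  (forall i, dominated_on (D i) (g i)) ->
  (forall i j, extends (D i) (g i) (D j) (g j) \/ extends (D j) (g j) (D i) (g i)) ->
  exists Du gu, dominated_on Du gu /\ forall i, extends (D i) (g i) Du gu.
Proof.
  intros Hdom Hchain.
  pose (pick x := epsilon (inhabits i0) (fun i => D i x)).
  pose (gu x := g (pick x) x).
  assert (Hgu : forall i x, D i x -> gu x = g i x).
  { intros i x Hx. assert (Hp : D (pick x) x) by (apply epsilon_spec; exists i; auto).
    unfold gu. destruct (Hchain i (pick x)) as [E|E].
    - apply (E x Hx).
    - symmetry; apply (E x Hp). }
  assert (Hboth : forall i j x y, D i x -> D j y -> exists k, D k x /\ D k y).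
  { intros i j x y Hx Hy. destruct (Hchain i j) as [E|E].
    - exists j. split; auto. apply E; auto.
    - exists i. split; auto. apply E; auto. }
  exists (fun x => exists i, D i x), gu. split.
  - split; [split; [|split] | split; [|split]].
    + exists i0. apply (Hdom i0).
    + intros x y [i Hx] [j Hy]. destruct (Hboth i j x y Hx Hy) as [k [Hkx Hky]].
      exists k. apply (Hdom k); auto.
    + intros a x [i Hx]. exists i. apply (Hdom i); auto.
    + intros x [i Hx]. apply (Hdom i); auto.
    + split.
      * intros x y [i Hx] [j Hy]. destruct (Hboth i j x y Hx Hy) as [k [Hkx Hky]].
        destruct (Hdom k) as [[_ [Hka _]] [_ [[Hkl _] _]]].
        rewrite !(Hgu k); auto.
      * intros a x [i Hx]. destruct (Hdom i) as [[_ [_ His]] [_ [[_ Hil] _]]].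
        rewrite !(Hgu i); auto.
    + intros x [i Hx]. rewrite (Hgu i) by auto. apply (Hdom i); auto.
  - intros i x Hx. split; [exists i; auto | apply Hgu; auto].
Qed.

Theorem dominated_extension_exists (D0 : Z -> Prop) (g0 : Z -> R) :
  dominated_on D0 g0 ->
  exists f, linear_on M f /\ (forall x, M x -> f x <= p x) /\ extends D0 g0 M f.
Proof.
  intro Hd0.
  pose (T := {dg | dominated_on (fst dg) (snd dg) /\ extends D0 g0 (fst dg) (snd dg)}).
  pose (le (s t : T) := extends (fst (proj1_sig s)) (snd (proj1_sig s))
                                (fst (proj1_sig t)) (snd (proj1_sig t))).
  assert (t0 : T) by (exists (D0, g0); split; [exact Hd0 | intros x Hx; auto]).
  destruct (zorn_preorder T t0 le) as [[[Dt gt] [Hdt Hext]] Hmax].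
  - intros s x Hx; auto.
  - intros r s u H1 H2 x Hx. destruct (H1 x Hx). destruct (H2 x H). split; auto. congruence.
  - intros A Hch. destruct (classic (exists s, A s)) as [[s0 As0]|NA].
    2:{ exists t0. intros s As; exfalso; eauto. }
    destruct (chain_union_dominated {s | A s} (exist _ s0 As0)
                (fun s => fst (proj1_sig (proj1_sig s))) (fun s => snd (proj1_sig (proj1_sig s))))
      as [Du [gu [Hdu Hu]]].
    + intro s. exact (proj1 (proj2_sig (proj1_sig s))).
    + intros [s As] [t At]. exact (Hch s t As At).
    + assert (Hok : dominated_on Du gu /\ extends D0 g0 Du gu).
      { split; auto. intros x Hx.
        destruct (proj2 (proj2_sig s0) x Hx) as [H1 H2].
        destruct (Hu (exist _ s0 As0) x H1) as [H3 H4]. split; auto. simpl in *. congruence. }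
      exists (exist _ (Du, gu) Hok). intros s As. exact (Hu (exist _ s As)).
  - simpl in *. assert (Hfull : forall y, M y -> Dt y).
    { intros y My. apply NNPP. intro Hy.
      destruct (extend_dominated Dt gt y Hdt My Hy) as [D' [g' [Hd' [He' Hy']]]].
      assert (Hok : dominated_on D' g' /\ extends D0 g0 D' g').
      { split; auto. intros x Hx. destruct (Hext x Hx). destruct (He' x H). split; congruence. }
      destruct (Hmax (exist _ (D', g') Hok) He' y Hy'); auto. }
    pose proof Hdt as [_ [HM [[La Ls] Hp]]].
    exists gt. split; [split|split]; auto.
    intros x Hx. destruct (Hext x Hx); auto.
Qed.

Corollary hahn_banach (x0 : Z) : M x0 ->
  exists f, linear_on M f /\ (forall x, M x -> f x <= p x) /\ f x0 = p x0.
Proof.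
  intro Mx0.
  assert (Hzero : dominated_on (fun z => z = vzero) (fun _ => 0)).
  { split; [split; [|split] | split; [|split]].
    - reflexivity.
    - intros x y -> ->. apply vadd_0.
    - intros a x ->. apply vscal_0_r.
    - intros x ->; auto.
    - split; intros; ring.
    - intros x ->. rewrite p_vzero. lra. }
  destruct (classic (x0 = vzero)) as [E|NE].
  - destruct (dominated_extension_exists _ _ Hzero) as [f [Hl [Hp He]]].
    exists f. split; auto. split; auto. subst x0. rewrite p_vzero. apply He; auto.
  - destruct (extend_by_vector _ _ x0 (p x0) Hzero Mx0 NE) as [D1 [g1 [Hd1 [_ [Hx1 Hg1]]]]].
    + intros d t ->. rewrite vadd_0_l. destruct (Rle_or_lt 0 t).
      * rewrite p_scal by auto. lra.
      * replace (vscal t x0) with (vscal (- t) (vscal (-1) x0)) by vring (x0 :: nil).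
        rewrite p_scal by (try lra; apply M_scal; auto).
        pose proof (p_add x0 (vscal (-1) x0) Mx0 (M_scal _ _ Mx0)) as Hs.
        replace (vadd x0 (vscal (-1) x0)) with (@vzero Z) in Hs by vring (x0 :: nil).
        rewrite p_vzero in Hs. nra.
    + destruct (dominated_extension_exists _ _ Hd1) as [f [Hl [Hp He]]].
      exists f. split; auto. split; auto. rewrite <- Hg1. apply He; auto.
Qed.
End HahnBanach.

Section ConeDistance.
Context {Y : VS} (W : NormedSub Y) (Q : Y -> Prop).
Hypothesis Q_mem : forall q, Q q -> mem W q.
Hypothesis Q_vzero : Q vzero.
Hypothesis Q_add : forall q1 q2, Q q1 -> Q q2 -> Q (vadd q1 q2).
Hypothesis Q_scal : forall a q, a > 0 -> Q q -> Q (vscal a q).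

Definition cone_dists (x : Y) (r : R) := exists q, Q q /\ r = nrm W (vsub x q).
Definition cone_dist (x : Y) := Rinf (cone_dists x).

Lemma cone_dist_spec x : mem W x -> is_inf (cone_dists x) (cone_dist x).
Proof.
  intro Hx. apply Rinf_spec.
  - exists (nrm W (vsub x vzero)), vzero; auto.
  - exists 0. intros r [q [Hq ->]]. apply nrm_nonneg, mem_sub; auto.
Qed.

Lemma cone_dist_le x q : mem W x -> Q q -> cone_dist x <= nrm W (vsub x q).
Proof. intros Hx Hq. apply (proj1 (cone_dist_spec x Hx)). exists q; auto. Qed.

Lemma cone_dist_le_nrm x : mem W x -> cone_dist x <= nrm W x.
Proof.
  intro Hx. replace (nrm W x) with (nrm W (vsub x vzero)) by (f_equal; vring (x :: nil)).
  apply cone_dist_le; auto.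
Qed.

Lemma cone_dist_in_cone q : Q q -> cone_dist q = 0.
Proof.
  intro Hq. apply Rle_antisym.
  - pose proof (cone_dist_le q q (Q_mem q Hq) Hq).
    replace (vsub q q) with (@vzero Y) in H by vring (q :: nil). rewrite nrm_vzero in H; auto.
  - apply (proj2 (cone_dist_spec q (Q_mem q Hq))). intros r [q' [Hq' ->]].
    apply nrm_nonneg, mem_sub; auto.
Qed.

Lemma cone_dist_add x y : mem W x -> mem W y ->
  cone_dist (vadd x y) <= cone_dist x + cone_dist y.
Proof.
  intros Hx Hy. apply Rle_plus_epsilon. intros eps He.
  destruct (is_inf_approx _ _ (cone_dist_spec x Hx) (eps/2)) as [r1 [[q1 [Hq1 ->]] L1]]; [lra|].
  destruct (is_inf_approx _ _ (cone_dist_spec y Hy) (eps/2)) as [r2 [[q2 [Hq2 ->]] L2]]; [lra|].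
  pose proof (cone_dist_le (vadd x y) (vadd q1 q2) (mem_add _ _ _ _ Hx Hy) (Q_add _ _ Hq1 Hq2)).
  replace (vsub (vadd x y) (vadd q1 q2)) with (vadd (vsub x q1) (vsub y q2)) in H
    by vring (x :: y :: q1 :: q2 :: nil).
  pose proof (nrm_triangle _ W (vsub x q1) (vsub y q2)
                (mem_sub _ _ _ Hx (Q_mem _ Hq1)) (mem_sub _ _ _ Hy (Q_mem _ Hq2))).
  lra.
Qed.

Lemma cone_dist_scal a x : 0 <= a -> mem W x -> cone_dist (vscal a x) = a * cone_dist x.
Proof.
  intros Ha Hx. destruct (Req_dec a 0) as [->|Hne].
  - rewrite vscal_0_l, cone_dist_in_cone by auto. ring.
  - assert (Hax : mem W (vscal a x)) by (apply mem_scal; auto).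
    assert (Hdist : forall q, Q q -> nrm W (vsub (vscal a x) (vscal a q)) = a * nrm W (vsub x q)).
    { intros q Hq. replace (vsub (vscal a x) (vscal a q)) with (vscal a (vsub x q))
        by vring (x :: q :: nil).
      apply nrm_scal_nonneg; auto. apply mem_sub; auto. }
    apply Rle_antisym.
    + apply Rle_plus_epsilon. intros eps He.
      destruct (is_inf_approx _ _ (cone_dist_spec x Hx) (eps / a)) as [r [[q [Hq ->]] Hr]].
      { apply Rdiv_lt_0_compat; lra. }
      pose proof (cone_dist_le (vscal a x) (vscal a q) Hax (Q_scal a q ltac:(lra) Hq)).
      rewrite Hdist in H by auto.
      apply (Rmult_lt_compat_l a) in Hr; [|lra].
      replace (a * (cone_dist x + eps / a)) with (a * cone_dist x + eps) in Hr by (field; lra).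
      lra.
    + apply (proj2 (cone_dist_spec (vscal a x) Hax)). intros r [q [Hq ->]].
      assert (Hq' : Q (vscal (/ a) q)) by (apply Q_scal; auto; apply Rinv_0_lt_compat; lra).
      replace q with (vscal a (vscal (/ a) q)) by vring (q :: nil).
      rewrite Hdist by auto.
      apply Rmult_le_compat_l; [lra|]. apply cone_dist_le; auto.
Qed.
End ConeDistance.

Definition seqVS : VS.
Proof.
  refine {| car := nat -> R; vzero := fun _ => 0; vadd := fun s t k => s k + t k;
            vopp := fun s k => - s k; vscal := fun a s k => a * s k |};
  intros; apply functional_extensionality; intro k; ring.
Defined.

Definition bounded_seq (s : seqVS) := exists C, forall k, Rabs (s k) <= C.

Definition eventual_bound (s : seqVS) (B : R) := exists n, forall k, (n <= k)%nat -> s k <= B.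
Definition limsup_seq (s : seqVS) := Rinf (eventual_bound s).

Lemma limsup_seq_spec s : bounded_seq s -> is_inf (eventual_bound s) (limsup_seq s).
Proof.
  intros [C HC]. apply Rinf_spec.
  - exists C, 0%nat. intros k _. pose proof (Rle_abs (s k)). pose proof (HC k). lra.
  - exists (- C). intros B [n Hn]. pose proof (Hn n (le_n n)). pose proof (HC n).
    pose proof (Rle_abs (- s n)) as Hneg; rewrite Rabs_Ropp in Hneg. lra.
Qed.

Lemma bounded_seq_add s t : bounded_seq s -> bounded_seq t -> bounded_seq (vadd s t).
Proof.
  intros [C1 H1] [C2 H2]. exists (C1 + C2). intro k. simpl.
  eapply Rle_trans. apply Rabs_triang. pose proof (H1 k); pose proof (H2 k). lra.
Qed.

Lemma bounded_seq_scal a s : bounded_seq s -> bounded_seq (vscal a s).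
Proof.
  intros [C H]. exists (Rabs a * C). intro k. simpl. rewrite Rabs_mult.
  apply Rmult_le_compat_l; auto. apply Rabs_pos.
Qed.

Lemma limsup_seq_add s t : bounded_seq s -> bounded_seq t ->
  limsup_seq (vadd s t) <= limsup_seq s + limsup_seq t.
Proof.
  intros Hs Ht. apply Rle_plus_epsilon. intros eps He.
  destruct (is_inf_approx _ _ (limsup_seq_spec s Hs) (eps/2)) as [B1 [[n1 H1] L1]]; [lra|].
  destruct (is_inf_approx _ _ (limsup_seq_spec t Ht) (eps/2)) as [B2 [[n2 H2] L2]]; [lra|].
  assert (limsup_seq (vadd s t) <= B1 + B2).
  { apply (proj1 (limsup_seq_spec _ (bounded_seq_add _ _ Hs Ht))). exists (max n1 n2).
    intros k Hk. simpl. pose proof (H1 k ltac:(lia)). pose proof (H2 k ltac:(lia)). lra. }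
  lra.
Qed.

Lemma eventual_bound_scal a s B : a > 0 ->
  eventual_bound (vscal a s) (a * B) <-> eventual_bound s B.
Proof.
  intro Ha. split; intros [n Hn]; exists n; intros k Hk; specialize (Hn k Hk); simpl in *.
  - apply (Rmult_le_reg_l a); auto.
  - apply Rmult_le_compat_l; lra.
Qed.

Lemma limsup_seq_scal a s : 0 <= a -> bounded_seq s -> limsup_seq (vscal a s) = a * limsup_seq s.
Proof.
  intros Ha Hs. pose proof (limsup_seq_spec _ (bounded_seq_scal a _ Hs)) as [Hlb Hglb].
  pose proof (limsup_seq_spec _ Hs) as [Hlb' Hglb'].
  destruct (Req_dec a 0) as [->|Hne].
  - rewrite Rmult_0_l. apply Rle_antisym.
    + apply Hlb. exists 0%nat. intros k _. simpl. lra.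
    + apply Hglb. intros B [n Hn]. pose proof (Hn n (le_n n)). simpl in H. lra.
  - apply Rle_antisym.
    + replace (limsup_seq (vscal a s)) with (a * (limsup_seq (vscal a s) / a)) by (field; lra).
      apply Rmult_le_compat_l; [lra|]. apply Hglb'. intros B HB.
      apply (Rmult_le_reg_l a); [lra|].
      replace (a * (limsup_seq (vscal a s) / a)) with (limsup_seq (vscal a s)) by (field; lra).
      apply Hlb, eventual_bound_scal; auto; lra.
    + apply Hglb. intros B HB.
      replace B with (a * (B / a)) by (field; lra).
      apply Rmult_le_compat_l; [lra|]. apply Hlb', (eventual_bound_scal a); [lra|].
      replace (a * (B / a)) with B by (field; lra). exact HB.
Qed.

Lemma banach_limit : exists L : seqVS -> R, linear_on bounded_seq L /\
  forall s B, bounded_seq s -> eventual_bound s B -> L s <= B.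
Proof.
  assert (H0 : bounded_seq vzero) by (exists 0; intro k; simpl; rewrite Rabs_R0; lra).
  destruct (hahn_banach bounded_seq limsup_seq H0 bounded_seq_add bounded_seq_scal
              limsup_seq_add limsup_seq_scal vzero H0) as [L [HL [Hp _]]].
  exists L. split; auto. intros s B Hs HB.
  eapply Rle_trans; [apply Hp; auto|]. apply (limsup_seq_spec s Hs); auto.
Qed.

Lemma dual_of_dominated {Y : VS} (W : NormedSub Y) (f : Y -> R) :
  linear_on (mem W) f -> (forall x, mem W x -> f x <= nrm W x) ->
  is_dual_elt W f /\ forall x, mem W x -> Rabs (f x) <= nrm W x.
Proof.
  intros [La Ls] Hp.
  assert (Hb : forall x, mem W x -> Rabs (f x) <= nrm W x).
  { intros x Hx. pose proof (Hp (vscal (-1) x) (mem_scal _ _ _ _ Hx)).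
    rewrite Ls, nrm_opp_scal in H by auto.
    unfold Rabs; destruct (Rcase_abs (f x)); pose proof (Hp x Hx); lra. }
  split; auto. split; auto. split; auto. exists 1. intros x Hx. rewrite Rmult_1_l; auto.
Qed.

Lemma norming_functional {Y : VS} (W : NormedSub Y) (x0 : Y) : mem W x0 ->
  exists f, is_dual_elt W f /\ (forall x, mem W x -> Rabs (f x) <= nrm W x) /\
    f x0 = nrm W x0.
Proof.
  intro Hx0.
  destruct (hahn_banach (mem W) (nrm W) (mem_0 _ W) (mem_add _ W) (mem_scal _ W)
              (nrm_triangle _ W) (nrm_scal_nonneg W) x0 Hx0) as [f [Hl [Hp Hf]]].
  destruct (dual_of_dominated W f Hl Hp). exists f; auto.
Qed.

(* A Banach limit of (f (gs k))_k defines an element of the bidual, which by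
   reflexivity is evaluation at some g. *)
Lemma weak_cluster_point {Y : VS} (W : NormedSub Y) (gs : nat -> Y) (Bg : R) :
  reflexive W -> (forall k, mem W (gs k)) -> (forall k, nrm W (gs k) <= Bg) ->
  exists g, mem W g /\ forall f B, is_dual_elt W f ->
    eventual_bound (fun k => f (gs k)) B -> f g <= B.
Proof.
  intros Hrefl Hm Hbd.
  destruct banach_limit as [L [[La Ls] Lb]].
  pose (sq (F : Y -> R) := (fun k => F (gs k)) : seqVS).
  assert (Hsq : forall F C, (forall x, mem W x -> Rabs (F x) <= C * nrm W x) ->
                  forall k, Rabs (sq F k) <= Rabs C * Rmax Bg 0).
  { intros F C HC k. eapply Rle_trans; [apply HC; auto|].
    eapply Rle_trans; [apply Rmult_le_compat_r; [apply nrm_nonneg; auto | apply RRle_abs]|].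
    apply Rmult_le_compat_l; [apply Rabs_pos|]. eapply Rle_trans; [apply Hbd|apply Rmax_l]. }
  assert (Hbnd : forall F, is_dual_elt W F -> bounded_seq (sq F)).
  { intros F [_ [_ [C HC]]]. exists (Rabs C * Rmax Bg 0). apply Hsq; auto. }
  pose (Phi F := L (sq F)).
  assert (Hbid : is_bidual_elt W Phi).
  { split; [|split; [|split]].
    - intros F G HF HG E. unfold Phi. f_equal. unfold sq. apply functional_extensionality.
      intro k; apply E; auto.
    - intros F G HF HG. unfold Phi. rewrite <- La by (apply Hbnd; auto). reflexivity.
    - intros a F HF. unfold Phi. rewrite <- Ls by (apply Hbnd; auto). reflexivity.
    - exists (Rmax Bg 0). intros F Mb HF [HM HFb].
      assert (Hk : forall k, Rabs (sq F k) <= Rmax Bg 0 * Mb).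
      { intro k. rewrite Rmult_comm, <- (Rabs_right Mb) by lra. apply Hsq; auto. }
      unfold Phi. unfold Rabs at 1. destruct (Rcase_abs (L (sq F))).
      + replace (- L (sq F)) with (L (vscal (-1) (sq F))) by (rewrite Ls by auto; ring).
        apply Lb; [apply bounded_seq_scal; auto|]. exists 0%nat. intros k _.
        pose proof (Rle_abs (- sq F k)) as Hneg; rewrite Rabs_Ropp in Hneg.
        pose proof (Hk k). simpl. lra.
      + apply Lb; auto. exists 0%nat. intros k _. pose proof (Rle_abs (sq F k)).
        pose proof (Hk k). lra. }
  destruct (Hrefl Phi Hbid) as [g [Hg Hgf]].
  exists g. split; auto. intros f B Hf HB. rewrite <- Hgf by auto. apply Lb; auto.
Qed.

Definition convex {Y : VS} (C : Y -> Prop) :=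
  forall c1 c2 a, C c1 -> C c2 -> 0 <= a <= 1 -> C (vadd (vscal a c1) (vscal (1 - a) c2)).

Section Separation.
Context {Y : VS} (W : NormedSub Y) (C : Y -> Prop) (c0 g : Y) (del : R).
Hypothesis C_mem : forall c, C c -> mem W c.
Hypothesis C_convex : convex C.
Hypothesis C_c0 : C c0.
Hypothesis g_mem : mem W g.
Hypothesis del_pos : del > 0.
Hypothesis C_far : forall c, C c -> del <= nrm W (vsub g c).

Let x0 := vsub g c0.

(* A vector of length del/2 pointing from c0 towards g. *)
Let w := vscal (del / (2 * nrm W x0)) x0.

(* The cone generated by (C - g) + [0,1] w; it stays at distance del/2 from x0. *)
Let Q q := q = vzero \/
  exists s t c, 0 < s /\ 0 <= t <= s /\ C c /\ q = vadd (vscal s (vsub c g)) (vscal t w).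

Let x0_mem : mem W x0.
Proof. apply mem_sub; auto. Qed.

Let x0_nrm : del <= nrm W x0.
Proof. apply C_far; auto. Qed.

Let w_mem : mem W w.
Proof. apply mem_scal, x0_mem. Qed.

Let w_nrm : nrm W w = del / 2.
Proof.
  pose proof x0_nrm. unfold w. rewrite nrm_scal_nonneg; auto using x0_mem.
  - field. lra.
  - apply Rlt_le, Rdiv_lt_0_compat; lra.
Qed.

Let Q_mem q : Q q -> mem W q.
Proof.
  intros [->|[s [t [c [_ [_ [Hc ->]]]]]]]; [apply mem_0|].
  apply mem_add; apply mem_scal; auto using mem_sub, w_mem.
Qed.

Let Q_add q1 q2 : Q q1 -> Q q2 -> Q (vadd q1 q2).
Proof.
  intros [->|[s1 [t1 [c1 [Hs1 [Ht1 [Hc1 ->]]]]]]].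
  { rewrite vadd_0_l; auto. }
  intros [->|[s2 [t2 [c2 [Hs2 [Ht2 [Hc2 ->]]]]]]].
  { rewrite vadd_0. right; exists s1, t1, c1; auto. }
  right. set (a := s1 / (s1 + s2)).
  exists (s1 + s2), (t1 + t2), (vadd (vscal a c1) (vscal (1 - a) c2)).
  repeat split; try lra.
  - apply C_convex; auto. unfold a. split.
    + apply Rlt_le, Rdiv_lt_0_compat; lra.
    + apply (Rmult_le_reg_r (s1 + s2)); [lra|]. field_simplify; lra.
  - unfold a. vring (c1 :: c2 :: g :: w :: nil).
Qed.

Let Q_scal a q : a > 0 -> Q q -> Q (vscal a q).
Proof.
  intros Ha [->|[s [t [c [Hs [Ht [Hc ->]]]]]]].
  - left. apply vscal_0_r.
  - right. exists (a * s), (a * t), c. repeat split; try nra; auto.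
    vring (c :: g :: w :: nil).
Qed.

Let Q_vzero : Q vzero.
Proof. left; reflexivity. Qed.

Let x0_far_from_Q q : Q q -> del / 2 <= nrm W (vsub x0 q).
Proof.
  pose proof x0_nrm. intros [->|[s [t [c [Hs [Ht [Hc ->]]]]]]].
  { replace (vsub x0 vzero) with x0 by vring (x0 :: nil). lra. }
  set (cn := vadd (vscal (/ (1 + s)) c0) (vscal (1 - / (1 + s)) c)).
  assert (Hcn : C cn).
  { apply C_convex; auto. split.
    - apply Rlt_le, Rinv_0_lt_compat; lra.
    - rewrite <- Rinv_1. apply Rinv_le_contravar; lra. }
  replace (vsub x0 (vadd (vscal s (vsub c g)) (vscal t w)))
    with (vsub (vscal (1 + s) (vsub g cn)) (vscal t w))
    by (unfold x0, cn; vring (g :: c0 :: c :: w :: nil)).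
  pose proof (nrm_reverse_triangle W (vscal (1 + s) (vsub g cn)) (vscal t w)
                (mem_scal _ _ _ _ (mem_sub _ _ _ g_mem (C_mem _ Hcn))) (mem_scal _ _ _ _ w_mem)).
  rewrite !nrm_scal_nonneg, w_nrm in H0 by (auto using mem_sub, w_mem; lra).
  pose proof (C_far cn Hcn). nra.
Qed.

Lemma separating_functional :
  exists f eta, is_dual_elt W f /\ eta > 0 /\ forall c, C c -> f c <= f g - eta.
Proof.
  destruct (hahn_banach (mem W) (cone_dist W Q) (mem_0 _ W) (mem_add _ W) (mem_scal _ W)
              (cone_dist_add W Q Q_mem Q_vzero Q_add)
              (cone_dist_scal W Q Q_mem Q_vzero Q_scal) x0 x0_mem)
    as [f [[La Ls] [Hfp Hfx0]]].
  assert (Hfd : is_dual_elt W f).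
  { apply (dual_of_dominated W f); [split; auto|]. intros x Hx.
    eapply Rle_trans; [apply Hfp; auto | apply cone_dist_le_nrm; auto]. }
  assert (Hdist : del / 2 <= f x0).
  { rewrite Hfx0. apply (cone_dist_spec W Q Q_mem Q_vzero x0 x0_mem).
    intros r [q [Hq ->]]. apply x0_far_from_Q; auto. }
  exists f, (f w). split; [|split]; auto.
  - pose proof x0_nrm. unfold w. rewrite Ls by apply x0_mem.
    apply Rmult_lt_0_compat; [apply Rdiv_lt_0_compat|]; lra.
  - intros c Hc.
    assert (HQ : Q (vadd (vadd c (vscal (-1) g)) w)).
    { right. exists 1, 1, c. repeat split; try lra; auto. vring (c :: g :: w :: nil). }
    pose proof (Hfp _ (Q_mem _ HQ)) as Hle.
    rewrite (cone_dist_in_cone W Q Q_mem Q_vzero) in Hle by auto.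
    rewrite !La, Ls in Hle by auto using mem_add, mem_scal, w_mem. lra.
Qed.

End Separation.

Lemma mazur {Y : VS} (W : NormedSub Y) (C : Y -> Prop) (c0 g : Y) :
  (forall c, C c -> mem W c) -> convex C -> C c0 -> mem W g ->
  (forall f B, is_dual_elt W f -> (forall c, C c -> f c <= B) -> f g <= B) ->
  forall del, del > 0 -> exists c, C c /\ nrm W (vsub g c) < del.
Proof.
  intros HCW Hconv Hc0 Hg Hweak del Hdel. apply NNPP. intro Hnear.
  destruct (separating_functional W C c0 g del) as [f [eta [Hfd [Heta Hsep]]]]; auto.
  { intros c Hc. apply Rnot_lt_le. intro Hlt. apply Hnear. exists c; auto. }
  pose proof (Hweak f (f g - eta) Hfd Hsep). lra.
Qed.

Lemma nrm_weak_limit_le {Y : VS} (W : NormedSub Y) (g : Y) (gs : nat -> Y) B :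
  mem W g -> (forall k, mem W (gs k)) ->
  (forall f B', is_dual_elt W f -> eventual_bound (fun k => f (gs k)) B' -> f g <= B') ->
  eventual_bound (fun k => nrm W (gs k)) B -> nrm W g <= B.
Proof.
  intros Hg Hgs Hweak [n Hn]. destruct (norming_functional W g Hg) as [f [Hfd [Hfb Hfg]]].
  rewrite <- Hfg. apply Hweak; auto. exists n. intros k Hk.
  pose proof (Rle_abs (f (gs k))). pose proof (Hfb _ (Hgs k)). pose proof (Hn k Hk). lra.
Qed.

Lemma nrm_limit_const {X : VS} (V : NormedSub X) (us : nat -> X) (u : X) c :
  mem V u -> (forall i, mem V (us i)) -> (forall i, nrm V (us i) = c) ->
  Un_cv (fun i => nrm V (vsub (us i) u)) 0 -> nrm V u = c.
Proof.
  intros Hu Hus Hc Hcv.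
  apply Rle_antisym; apply Rle_plus_epsilon; intros eps He; destruct (Hcv eps He) as [N HN];
    specialize (HN N (le_n N)); unfold R_dist in HN; rewrite Rminus_0_r in HN;
    pose proof (Rle_abs (nrm V (vsub (us N) u))); rewrite <- (Hc N).
  - pose proof (nrm_reverse_triangle V u (us N) Hu (Hus N)).
    rewrite nrm_sub_sym in H0 by auto. lra.
  - pose proof (nrm_reverse_triangle V (us N) u (Hus N) Hu). lra.
Qed.

Lemma strict_increasing_ge_id (phi : nat -> nat) :
  (forall i, (phi i < phi (S i))%nat) -> forall i, (i <= phi i)%nat.
Proof. intros H i; induction i; [lia|]. specialize (H i). lia. Qed.

Section GradientSpace.
Context {X Y : VS} (V : NormedSub X) (W : NormedSub Y) (Rel : X -> Y -> Prop).
Hypothesis GS : gradient_space V W Rel.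

Let Rel_add : forall u g u' g', Rel u g -> Rel u' g' -> Rel (vadd u u') (vadd g g').
Proof. apply (proj1 (proj1 GS)). Qed.

Let Rel_scal : forall u g a, Rel u g -> a > 0 -> Rel (vscal a u) (vscal a g).
Proof. apply (proj2 (proj1 GS)). Qed.

Definition grads_near (u : X) (eps : R) (c : Y) :=
  exists x, mem V x /\ mem W c /\ Rel x c /\ nrm V (vsub x u) <= eps.

Lemma grads_near_convex u eps : mem V u -> convex (grads_near u eps).
Proof.
  intros Hu c1 c2 a [x1 [Hx1 [Hc1 [HR1 Hn1]]]] [x2 [Hx2 [Hc2 [HR2 Hn2]]]] Ha.
  destruct (Req_dec a 0) as [->|Ha0].
  { exists x2. replace (vadd (vscal 0 c1) (vscal (1 - 0) c2)) with c2
      by vring (c1 :: c2 :: nil). auto. }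
  destruct (Req_dec a 1) as [->|Ha1].
  { exists x1. replace (vadd (vscal 1 c1) (vscal (1 - 1) c2)) with c1
      by vring (c1 :: c2 :: nil). auto. }
  exists (vadd (vscal a x1) (vscal (1 - a) x2)). repeat split.
  - apply mem_add; apply mem_scal; auto.
  - apply mem_add; apply mem_scal; auto.
  - apply Rel_add; apply Rel_scal; auto; lra.
  - replace (vsub (vadd (vscal a x1) (vscal (1 - a) x2)) u)
      with (vadd (vscal a (vsub x1 u)) (vscal (1 - a) (vsub x2 u))) by vring (x1 :: x2 :: u :: nil).
    eapply Rle_trans; [apply nrm_triangle; apply mem_scal, mem_sub; auto|].
    rewrite !nrm_scal_nonneg by (try lra; apply mem_sub; auto). nra.
Qed.

(* Mazur's lemma turns a weak cluster point of gradients into a strong limit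
   of gradients, and GS4 closes the relation. *)
Lemma weak_limit_grad (u : X) (g : Y) (us : nat -> X) (gs : nat -> Y) :
  mem V u -> mem W g -> (forall i, mem V (us i)) -> (forall i, mem W (gs i)) ->
  (forall i, Rel (us i) (gs i)) -> Un_cv (fun i => nrm V (vsub (us i) u)) 0 ->
  (forall f B, is_dual_elt W f -> eventual_bound (fun k => f (gs k)) B -> f g <= B) ->
  Rel u g.
Proof.
  intros Hu Hg Hus Hgs HR Hcv Hweak.
  assert (Htail : forall eps, eps > 0 ->
            exists N, forall k, (N <= k)%nat -> grads_near u eps (gs k)).
  { intros eps He. destruct (Hcv eps He) as [N HN]. exists N. intros k Hk. exists (us k).
    specialize (HN k Hk). unfold R_dist in HN. rewrite Rminus_0_r in HN.
    pose proof (Rle_abs (nrm V (vsub (us k) u))). repeat split; auto; lra. }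
  assert (Happrox : forall k, exists xc : X * Y, mem V (fst xc) /\ mem W (snd xc) /\
            Rel (fst xc) (snd xc) /\ nrm V (vsub (fst xc) u) <= inv_succ k /\
            nrm W (vsub g (snd xc)) < inv_succ k).
  { intro k. destruct (Htail (inv_succ k) (inv_succ_pos k)) as [N HN].
    assert (Hmem : forall c, grads_near u (inv_succ k) c -> mem W c)
      by (intros c [x [_ [Hc _]]]; auto).
    assert (Hsep : forall f B, is_dual_elt W f ->
              (forall c, grads_near u (inv_succ k) c -> f c <= B) -> f g <= B).
    { intros f B Hf HB. apply Hweak; auto. exists N. intros k' Hk'. apply HB, HN; auto. }
    destruct (mazur W _ (gs N) g Hmem (grads_near_convex u _ Hu) (HN N (le_n N)) Hg Hsep
                (inv_succ k) (inv_succ_pos k)) as [c [[x [Hx [Hc [HRx Hxu]]]] Hgc]].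
    exists (x, c); auto. }
  destruct (choice _ Happrox) as [xc Hxc].
  apply (proj2 (proj2 (proj2 (proj2 GS))) u g (fun k => fst (xc k)) (fun k => snd (xc k)));
    auto; try (intro k; apply (Hxc k)).
  - apply Un_cv_inv_succ_bound. intro k. destruct (Hxc k) as [H1 [_ [_ [H4 _]]]].
    rewrite nrm_sub_sym by auto. split; auto. apply nrm_nonneg, mem_sub; auto.
  - apply Un_cv_inv_succ_bound. intro k. destruct (Hxc k) as [_ [H2 [_ [_ H5]]]].
    split; [apply nrm_nonneg, mem_sub; auto | lra].
Qed.

Lemma grad_of_limit (u : X) (us : nat -> X) (gs : nat -> Y) (Bg : R) :
  mem V u -> (forall i, mem V (us i)) -> (forall i, mem W (gs i)) ->
  (forall i, Rel (us i) (gs i)) -> Un_cv (fun i => nrm V (vsub (us i) u)) 0 ->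
  (forall i, nrm W (gs i) <= Bg) ->
  exists g, mem W g /\ Rel u g /\
    forall B, eventual_bound (fun k => nrm W (gs k)) B -> nrm W g <= B.
Proof.
  intros Hu Hus Hgs HR Hcv Hbd.
  destruct (weak_cluster_point W gs Bg) as [g [Hg Hweak]]; auto.
  { destruct GS as [_ [_ [[[_ Hrefl] _] _]]]. exact Hrefl. }
  exists g. split; [|split]; auto.
  - apply (weak_limit_grad u g us gs); auto.
  - intros B HB. apply (nrm_weak_limit_le W g gs); auto.
Qed.

Lemma mingrad_spec (u : X) : Sob V W Rel u -> is_min_grad W Rel u (mingrad W Rel u).
Proof.
  intros [Hu [g0 [Hg0 HR0]]]. unfold mingrad. apply epsilon_spec.
  pose (E r := exists h, mem W h /\ Rel u h /\ r = nrm W h).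
  destruct (is_inf_exists E) as [d [Hd1 Hd2]].
  { exists (nrm W g0), g0; auto. }
  { exists 0. intros r [h [Hh [_ ->]]]. apply nrm_nonneg; auto. }
  assert (Happrox : forall k, exists h, mem W h /\ Rel u h /\ nrm W h < d + inv_succ k).
  { intro k. destruct (is_inf_approx E d (conj Hd1 Hd2) (inv_succ k) (inv_succ_pos k))
      as [r [[h [Hh [HRh ->]]] Hr]].
    exists h; auto. }
  destruct (choice _ Happrox) as [hs Hhs].
  destruct (grad_of_limit u (fun _ => u) hs (d + 1)) as [g [Hg [HRg Hgb]]];
    auto; try (intro k; apply (Hhs k)).
  - apply Un_cv_inv_succ_bound. intro k. replace (vsub u u) with (@vzero X) by vring (u :: nil).
    rewrite nrm_vzero. pose proof (inv_succ_pos k). lra.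
  - intro k. destruct (Hhs k) as [_ [_ H]]. pose proof (inv_succ_le_1 k). lra.
  - exists g. split; [|split]; auto. intros g' Hg' HR'.
    assert (nrm W g <= d).
    { apply le_of_le_plus_inv_succ. intro n. apply Hgb. exists n. intros k Hk.
      destruct (Hhs k) as [_ [_ H]]. pose proof (inv_succ_le n k Hk). lra. }
    pose proof (Hd1 (nrm W g') (ex_intro _ g' (conj Hg' (conj HR' eq_refl)))). lra.
Qed.

Lemma mingrad_scal (v : X) (a : R) : a > 0 -> Sob V W Rel v -> Sob V W Rel (vscal a v) ->
  nrm W (mingrad W Rel (vscal a v)) = a * nrm W (mingrad W Rel v).
Proof.
  intros Ha Hv Hav.
  destruct (mingrad_spec v Hv) as [M1 [R1 P1]].
  destruct (mingrad_spec (vscal a v) Hav) as [M2 [R2 P2]].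
  apply Rle_antisym.
  - rewrite <- nrm_scal_nonneg by (auto; lra). apply P2; auto using mem_scal.
  - assert (Hinv : / a > 0) by (apply Rinv_0_lt_compat; lra).
    assert (nrm W (mingrad W Rel v) <= / a * nrm W (mingrad W Rel (vscal a v))).
    { rewrite <- nrm_scal_nonneg by (auto; lra). apply P1; auto using mem_scal.
      replace v with (vscal (/ a) (vscal a v)) at 1 by vring (v :: nil). auto. }
    apply (Rmult_le_compat_l a) in H; [|lra].
    replace (a * (/ a * nrm W (mingrad W Rel (vscal a v))))
      with (nrm W (mingrad W Rel (vscal a v))) in H by (field; lra).
    lra.
Qed.

End GradientSpace.

Section RayleighQuotient.
Context {X Y : VS} (V : NormedSub X) (W : NormedSub Y) (Rel : X -> Y -> Prop) (K : X -> Prop).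
Hypothesis GS : gradient_space V W Rel.
Hypothesis K_cone : is_cone V W Rel K.

Definition rayleigh (v : X) := nrm W (mingrad W Rel v) / nrm V v.

Definition rayleigh_values (r : R) := exists v, K v /\ v <> vzero /\ r = rayleigh v.

Let K_mem v : K v -> mem V v.
Proof. intro Kv. apply (proj1 K_cone v Kv). Qed.

Let K_mingrad_mem v : K v -> mem W (mingrad W Rel v).
Proof. intro Kv. apply (mingrad_spec V W Rel GS v (proj1 K_cone v Kv)). Qed.

Let K_nrm_pos v : K v -> v <> vzero -> nrm V v > 0.
Proof.
  intros Kv Hv. destruct (nrm_nonneg _ V v (K_mem v Kv)) as [H|H]; [lra|].
  exfalso; apply Hv; apply (nrm_eq0 _ V); auto.
Qed.

Lemma rayleigh_inf_exists (u0 : X) : K u0 -> u0 <> vzero ->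
  exists m, is_inf rayleigh_values m.
Proof.
  intros Ku0 Hu0.
  assert (Hnonneg : forall r, rayleigh_values r -> 0 <= r).
  { intros r [v [Kv [Hv ->]]]. unfold rayleigh, Rdiv. apply Rmult_le_pos.
    - apply nrm_nonneg; auto.
    - apply Rlt_le, Rinv_0_lt_compat, K_nrm_pos; auto. }
  apply is_inf_exists.
  - exists (rayleigh u0), u0; auto.
  - exists 0; auto.
Qed.

Lemma normalized_minimizing_seq m : is_inf rayleigh_values m ->
  exists ws : nat -> X, forall k,
    K (ws k) /\ nrm V (ws k) = 1 /\ nrm W (mingrad W Rel (ws k)) < m + inv_succ k.
Proof.
  intro Hm.
  assert (Happrox : forall k, exists w, K w /\ nrm V w = 1 /\
                                nrm W (mingrad W Rel w) < m + inv_succ k).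
  { intro k. destruct (is_inf_approx _ m Hm (inv_succ k) (inv_succ_pos k))
      as [r [[v [Kv [Hv ->]]] Hr]].
    pose proof (K_nrm_pos v Kv Hv) as Hpos.
    assert (Hinv : / nrm V v > 0) by (apply Rinv_0_lt_compat; auto).
    assert (Kw : K (vscal (/ nrm V v) v)) by (apply (proj2 K_cone); auto).
    exists (vscal (/ nrm V v) v). split; [|split]; auto.
    - rewrite nrm_scal_nonneg by (auto; lra). field. lra.
    - rewrite (mingrad_scal V W Rel GS) by (auto; apply (proj1 K_cone); auto).
      unfold rayleigh, Rdiv in Hr. lra. }
  exact (choice _ Happrox).
Qed.

Lemma mingrad_limit_le (us : nat -> X) (u : X) m :
  K u -> (forall k, K (us k)) -> Un_cv (fun k => nrm V (vsub (us k) u)) 0 ->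
  (forall k, nrm W (mingrad W Rel (us k)) <= m + inv_succ k) ->
  nrm W (mingrad W Rel u) <= m.
Proof.
  intros Ku Kus Hcv Hbd.
  assert (Hgrad : forall k, Rel (us k) (mingrad W Rel (us k)))
    by (intro k; apply (mingrad_spec V W Rel GS), (proj1 K_cone); auto).
  assert (Hbd1 : forall k, nrm W (mingrad W Rel (us k)) <= m + 1)
    by (intro k; pose proof (Hbd k); pose proof (inv_succ_le_1 k); lra).
  destruct (grad_of_limit V W Rel GS u us (fun k => mingrad W Rel (us k)) (m + 1)
              (K_mem u Ku) (fun k => K_mem _ (Kus k)) (fun k => K_mingrad_mem _ (Kus k))
              Hgrad Hcv Hbd1) as [g [Hg [HRg Hgb]]].
  destruct (mingrad_spec V W Rel GS u (proj1 K_cone u Ku)) as [_ [_ Hmin]].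
  apply (Rle_trans _ _ _ (Hmin g Hg HRg)).
  apply le_of_le_plus_inv_succ. intro n. apply Hgb. exists n. intros k Hk.
  pose proof (Hbd k). pose proof (inv_succ_le n k Hk). lra.
Qed.

End RayleighQuotient.

Theorem mainTheorem12 (X Y : VS) (V : NormedSub X) (W : NormedSub Y)
  (Rel : X -> Y -> Prop) (K : X -> Prop) :
  gradient_space V W Rel ->
  RK_cone V W Rel K ->
  regular_cone W Rel K ->
  (exists u0, K u0 /\ u0 <> vzero) ->
  exists u, K u /\ u <> vzero /\
    is_inf (fun r => exists v, K v /\ v <> vzero /\
                 r = nrm W (mingrad W Rel v) / nrm V v)
           (nrm W (mingrad W Rel u) / nrm V u) /\
    nrm W (mingrad W Rel u) / nrm V u > 0.
Proof.
  intros GS [Kcone RK] Reg [u0 [Ku0 Hu0]].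
  destruct (rayleigh_inf_exists V W Rel K GS Kcone u0 Ku0 Hu0) as [m Hm].
  destruct (normalized_minimizing_seq V W Rel K GS Kcone m Hm) as [ws Hws].
  destruct (RK ws) as [phi [u [Hphi [Ku Hcv]]]].
  - intro k; apply Hws.
  - exists 1. intro k. destruct (Hws k) as [_ [-> _]]. lra.
  - exists (m + 1). intro k. destruct (Hws k) as [_ [_ H]]. pose proof (inv_succ_le_1 k). lra.
  - assert (Kus : forall k, K (ws (phi k))) by (intro k; apply Hws).
    assert (Hnu : nrm V u = 1).
    { apply (nrm_limit_const V (fun k => ws (phi k))); auto;
        [apply (proj1 Kcone u Ku) | intro k; apply (proj1 Kcone), Kus | intro k; apply Hws]. }
    assert (Hgu : nrm W (mingrad W Rel u) <= m).
    { apply (mingrad_limit_le V W Rel K GS Kcone (fun k => ws (phi k))); auto.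
      intro k. destruct (Hws (phi k)) as [_ [_ H]].
      pose proof (inv_succ_le k (phi k) (strict_increasing_ge_id phi Hphi k)). lra. }
    assert (Hnz : u <> vzero) by (intro E; rewrite E, nrm_vzero in Hnu; lra).
    assert (Hmu : m <= nrm W (mingrad W Rel u)).
    { rewrite <- (Rdiv_1_r (nrm W _)), <- Hnu. apply (proj1 Hm). exists u; auto. }
    assert (Hgrad : mem W (mingrad W Rel u))
      by apply (mingrad_spec V W Rel GS), (proj1 Kcone), Ku.
    exists u. rewrite Hnu, Rdiv_1_r. split; [|split; [|split]]; auto.
    + replace (nrm W (mingrad W Rel u)) with m by lra. exact Hm.
    + destruct (nrm_nonneg _ W _ Hgrad) as [H|H]; auto.
      exfalso. apply Hnz, Reg, (nrm_eq0 _ W); auto.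
Qed.
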